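(* Let $\mathcal M=(M,<,+,0,\ldots)$ be a definably complete locally o-minimal expansion of an ordered group. Let $(G,d_G)$ be a definably compact definable metric group, $(X,d_X)$ a definable metric space, and suppose $G$ acts on $X$ by a definable continuous left action. Let $\pi:X\to Q$ be the canonical projection onto the definable quotient space $Q$ of $X$ by $G$. Then (1) $\pi$ is definably closed; and (2) $X$ is definably compact if and only if $Q$ is definably compact.
   Context: ''Definable'' means definable in $\mathcal M$ with parameters. $\mathcal M$ is an expansion of an ordered group with dense order without endpoints; locally o-minimal: for every definable $Y\subseteq M$ and $a\in M$ there is an open interval $I\ni a$ with $Y\cap I$ a finite union of points and open intervals; definably complete: every definable subset of $M$ has sup and inf in $M\cup\{\pm\infty\}$. A definable metric space $(X,d_X)$ is a definable set with a definable $d_X:X\times X\to\{a\ge0\}$ satisfying $d_X(x,y)=0\iff x=y$, symmetry and triangle inequality, topologized by the balls. A definable metric group is a definable metric space whose underlying set is a definable group with multiplication and inversion continuous. A definable topological space (definable set, topology with definable open base) is definably compact if every definable filtered family (any two members contain a common member) of nonempty closed subsets has nonempty intersection. The definable quotient is a definable topological space $(Q,\tau_Q)$ with definable continuous $\pi:X\to Q$ such that every definable continuous map from $X$ to a definable topological space constant on $G$-orbits factors as $\psi\circ\pi$ with $\psi$ definable continuous (concretely: $Q$ a definable set meeting each orbit in one point, $\pi(x)$ the point of $Q$ in $Gx$, and $S\subseteq Q$ open iff $\pi^{-1}(S)$ open). A definable map is definably closed if it maps definable closed sets to closed sets. *)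

(* An abstract first-order structure on M, presented (as in
   van den Dries, "Tame topology and o-minimal structures") by the family
   Def n of its definable (with parameters) subsets of M^n.  Points of M^n
   are lists of length n. *)
From Stdlib Require Import List Arith.
Import ListNotations.
Set Implicit Arguments.

Record lang (M : Type) := Lang {
  lt : M -> M -> Prop;
  add : M -> M -> M;
  zero : M;
  opp : M -> M;
  Def : nat -> (list M -> Prop) -> Prop
}.

Section Defs.
Variable M : Type.
Variable L : lang M.

Definition le (x y : M) : Prop := lt L x y \/ x = y.

Definition ogroup_axioms : Prop :=
  (forall x, ~ lt L x x) /\
  (forall x y z, lt L x y -> lt L y z -> lt L x z) /\
  (forall x y, lt L x y \/ x = y \/ lt L y x) /\
  (forall x y z, add L x (add L y z) = add L (add L x y) z) /\
  (forall x, add L (zero L) x = x /\ add L x (zero L) = x) /\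
  (forall x, add L (opp L x) x = zero L /\ add L x (opp L x) = zero L) /\
  (forall x y z, lt L x y -> lt L (add L z x) (add L z y) /\ lt L (add L x z) (add L y z)) /\
  (forall x y, lt L x y -> exists z, lt L x z /\ lt L z y) /\
  (forall x, (exists y, lt L y x) /\ (exists y, lt L x y)).

(* Def is a structure on M (Boolean algebras of subsets of M^n, closed under
   products, containing diagonals, closed under projections) expanding
   (M,<,+) and containing all singletons (definability with parameters). *)
Definition structure_axioms : Prop :=
  (forall n A, Def L n A -> forall s, A s -> length s = n) /\
  (forall n, Def L n (fun s => length s = n)) /\
  (forall n A, Def L n A -> Def L n (fun s => length s = n /\ ~ A s)) /\
  (forall n A B, Def L n A -> Def L n B -> Def L n (fun s => A s /\ B s)) /\
  (forall n m A B, Def L n A -> Def L m B ->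
     Def L (n + m) (fun s => A (firstn n s) /\ B (skipn n s))) /\
  (forall n i j, i < n -> j < n ->
     Def L n (fun s => length s = n /\ nth_error s i = nth_error s j)) /\
  (forall n A, Def L (S n) A -> Def L n (fun s => exists a, A (s ++ [a]))) /\
  Def L 2 (fun s => exists x y, s = [x; y] /\ lt L x y) /\
  Def L 3 (fun s => exists x y, s = [x; y; add L x y]) /\
  (forall a, Def L 1 (fun s => s = [a])).

Definition Def1 (Y : M -> Prop) : Prop :=
  Def L 1 (fun s => exists y, s = [y] /\ Y y).

Inductive ext := NInf | Fin (a : M) | PInf.

Definition ext_lt (a b : ext) : Prop :=
  match a, b with
  | NInf, Fin _ | NInf, PInf | Fin _, PInf => True
  | Fin x, Fin y => lt L x y
  | _, _ => False
  end.
Definition ext_le (a b : ext) : Prop := ext_lt a b \/ a = b.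

Definition in_ival (l u : ext) (x : M) : Prop := ext_lt l (Fin x) /\ ext_lt (Fin x) u.

Definition locally_o_minimal : Prop :=
  forall Y, Def1 Y -> forall a, exists l u, in_ival l u a /\
    exists (ps : list M) (ivs : list (ext * ext)),
      forall x, (Y x /\ in_ival l u x) <->
        (In x ps \/ exists p, In p ivs /\ in_ival (fst p) (snd p) x).

Definition is_sup (Y : M -> Prop) (s : ext) : Prop :=
  (forall y, Y y -> ext_le (Fin y) s) /\
  (forall b, (forall y, Y y -> ext_le (Fin y) b) -> ext_le s b).
Definition is_inf (Y : M -> Prop) (s : ext) : Prop :=
  (forall y, Y y -> ext_le s (Fin y)) /\
  (forall b, (forall y, Y y -> ext_le b (Fin y)) -> ext_le b s).

Definition definably_complete : Prop :=
  forall Y, Def1 Y -> (exists s, is_sup Y s) /\ (exists i, is_inf Y i).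

Definition def_map (n : nat) (X : list M -> Prop) (m : nat) (Y : list M -> Prop)
  (f : list M -> list M) : Prop :=
  (forall x, X x -> Y (f x)) /\
  Def L (n + m) (fun s => exists x, X x /\ s = x ++ f x).

Definition def_map2 (n1 : nat) (X1 : list M -> Prop) (n2 : nat) (X2 : list M -> Prop)
  (m : nat) (Y : list M -> Prop) (f : list M -> list M -> list M) : Prop :=
  (forall x y, X1 x -> X2 y -> Y (f x y)) /\
  Def L (n1 + n2 + m) (fun s => exists x y, X1 x /\ X2 y /\ s = x ++ y ++ f x y).

Definition def_metric_space (n : nat) (X : list M -> Prop) (d : list M -> list M -> M) : Prop :=
  Def L n X /\
  Def L (n + n + 1) (fun s => exists x y, X x /\ X y /\ s = x ++ y ++ [d x y]) /\
  (forall x y, X x -> X y -> le (zero L) (d x y)) /\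
  (forall x y, X x -> X y -> (d x y = zero L <-> x = y)) /\
  (forall x y, X x -> X y -> d x y = d y x) /\
  (forall x y z, X x -> X y -> X z -> le (d x z) (add L (d x y) (d y z))).

Definition open_in (X : list M -> Prop) (d : list M -> list M -> M) (U : list M -> Prop) : Prop :=
  (forall x, U x -> X x) /\
  forall x, U x -> exists e, lt L (zero L) e /\
    forall y, X y -> lt L (d x y) e -> U y.

Definition closed_in (X : list M -> Prop) (d : list M -> list M -> M) (C : list M -> Prop) : Prop :=
  (forall x, C x -> X x) /\ open_in X d (fun x => X x /\ ~ C x).

Definition cont1 (X : list M -> Prop) dX (dY : list M -> list M -> M) (f : list M -> list M) : Prop :=
  forall x, X x -> forall e, lt L (zero L) e -> exists de, lt L (zero L) de /\
    forall x', X x' -> lt L (dX x x') de -> lt L (dY (f x) (f x')) e.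

Definition cont2 (X1 : list M -> Prop) d1 (X2 : list M -> Prop) d2
  (dY : list M -> list M -> M) (f : list M -> list M -> list M) : Prop :=
  forall x y, X1 x -> X2 y -> forall e, lt L (zero L) e -> exists de, lt L (zero L) de /\
    forall x' y', X1 x' -> X2 y' -> lt L (d1 x x') de -> lt L (d2 y y') de ->
      lt L (dY (f x y) (f x' y')) e.

Definition def_metric_group (m : nat) (G : list M -> Prop) (dG : list M -> list M -> M)
  (mul : list M -> list M -> list M) (inv : list M -> list M) (e : list M) : Prop :=
  def_metric_space m G dG /\
  G e /\
  def_map2 m G m G m G mul /\ def_map m G m G inv /\
  (forall x y z, G x -> G y -> G z -> mul x (mul y z) = mul (mul x y) z) /\
  (forall x, G x -> mul e x = x /\ mul x e = x) /\
  (forall x, G x -> mul (inv x) x = e /\ mul x (inv x) = e) /\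
  cont2 G dG G dG dG mul /\ cont1 G dG dG inv.

Definition def_cont_action (m : nat) (G : list M -> Prop) dG mul (e : list M)
  (n : nat) (X : list M -> Prop) dX (act : list M -> list M -> list M) : Prop :=
  def_map2 m G n X n X act /\
  cont2 G dG X dX dX act /\
  (forall x, X x -> act e x = x) /\
  (forall g h x, G g -> G h -> X x -> act (mul g h) x = act g (act h x)).

Definition def_family (k n : nat) (T : list M -> Prop) (F : list M -> list M -> Prop) : Prop :=
  Def L k T /\ Def L (k + n) (fun s => exists t x, T t /\ F t x /\ s = t ++ x).

Definition filtered (T : list M -> Prop) (F : list M -> list M -> Prop) : Prop :=
  (exists t, T t) /\
  forall t1 t2, T t1 -> T t2 -> exists t3, T t3 /\
    forall x, F t3 x -> F t1 x /\ F t2 x.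

Definition def_compact (n : nat) (Y : list M -> Prop) (closed : (list M -> Prop) -> Prop) : Prop :=
  forall k T F, def_family k n T F -> filtered T F ->
    (forall t, T t -> closed (F t) /\ exists x, F t x) ->
    exists x, Y x /\ forall t, T t -> F t x.

Definition open_Q (X : list M -> Prop) dX (Q : list M -> Prop) (pi : list M -> list M)
  (S : list M -> Prop) : Prop :=
  (forall q, S q -> Q q) /\ open_in X dX (fun x => X x /\ S (pi x)).

Definition closed_Q (X : list M -> Prop) dX (Q : list M -> Prop) (pi : list M -> list M)
  (C : list M -> Prop) : Prop :=
  (forall q, C q -> Q q) /\ open_Q X dX Q pi (fun q => Q q /\ ~ C q).

(* (Q, pi) is the definable quotient of X by G (concrete description):
   Q a definable subset of X meeting each orbit in exactly one point,
   pi x the point of Q in G x, Q carries the quotient topology, which has a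
   definable open base. *)
Definition def_quotient (G : list M -> Prop) (act : list M -> list M -> list M)
  (n : nat) (X : list M -> Prop) dX (Q : list M -> Prop) (pi : list M -> list M) : Prop :=
  Def L n Q /\
  (forall q, Q q -> X q) /\
  (forall x, X x -> Q (pi x) /\ exists g, G g /\ pi x = act g x) /\
  (forall x q1 q2, X x -> Q q1 -> Q q2 ->
     (exists g, G g /\ q1 = act g x) -> (exists g, G g /\ q2 = act g x) -> q1 = q2) /\
  (exists k T B, def_family k n T B /\
     (forall t, T t -> open_Q X dX Q pi (B t)) /\
     (forall S, open_Q X dX Q pi S -> forall q, S q ->
        exists t, T t /\ B t q /\ forall q', B t q' -> S q')).

Definition def_closed_map (n : nat) (X : list M -> Prop) dX (Q : list M -> Prop)
  (pi : list M -> list M) : Prop :=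
  forall C, Def L n C -> closed_in X dX C ->
    closed_Q X dX Q pi (fun q => exists x, C x /\ pi x = q).

End Defs.

(* Closedness of pi: suppose the orbit of x misses the closed set C while every ball around x
   meets G C. For a > 0 let A_a be the set of g such that g y lies in C for some y within a of x.
   The closures of the A_a form a filtered definable family of nonempty closed subsets of the
   definably compact group G, so they share a point g0, and continuity of the action at (g0, x)
   puts g0 x in C, a contradiction.
   Compactness then transfers along pi. A filtered family of closed sets of Q pulls back to one of
   X. Conversely, if F_t is a filtered family of closed sets of X, the sets pi(F_t) are closed and
   share a point q; the sets {g | g q in F_t} are closed in G, filtered, and nonempty since F_t
   meets the orbit of q, so some g puts g q in every F_t. *)

From Stdlib Require Import List Arith Lia.
From Stdlib Require Import FunctionalExtensionality PropExtensionality Classical.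
Import ListNotations.
Set Implicit Arguments.
Unset Strict Implicit.

(** * Definability of first-order combinations *)

Section Blocks.
Variable A : Type.

Lemma firstn_app_length (a b : list A) k : length a = k -> firstn k (a ++ b) = a.
Proof. intros <-. rewrite firstn_app, Nat.sub_diag, firstn_all; apply app_nil_r. Qed.

Lemma skipn_app_length (a b : list A) k : length a = k -> skipn k (a ++ b) = b.
Proof. intros <-. rewrite skipn_app, Nat.sub_diag, skipn_all; reflexivity. Qed.

Lemma firstn_app_length_add (a b : list A) k j :
  length a = k -> firstn (k + j) (a ++ b) = a ++ firstn j b.
Proof. intros <-. apply firstn_app_2. Qed.

Lemma skipn_app_length_add (a b : list A) k j :
  length a = k -> skipn (k + j) (a ++ b) = skipn j b.
Proof. intros <-. rewrite skipn_app, skipn_all2, Nat.add_comm, Nat.add_sub by lia. reflexivity. Qed.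

Lemma app_inj_length (a b a' b' : list A) :
  length a = length a' -> a ++ b = a' ++ b' -> a = a' /\ b = b'.
Proof.
  intros Hl E. split.
  - rewrite <- (firstn_app_length b (eq_refl (length a))), E. now apply firstn_app_length.
  - rewrite <- (skipn_app_length b (eq_refl (length a))), E. now apply skipn_app_length.
Qed.

Lemma split_length (s : list A) a b : length s = a + b ->
  exists t u, length t = a /\ length u = b /\ s = t ++ u.
Proof.
  intros H. exists (firstn a s), (skipn a s). rewrite length_firstn, length_skipn.
  repeat split; [lia | lia | symmetry; apply firstn_skipn].
Qed.

End Blocks.

Ltac solve_length := repeat rewrite ?length_app, ?length_skipn, ?length_firstn; simpl; lia.
(* Re-association comes last: done too early it would block the cancellation of outer blocks. *)
Ltac simpl_blocks := repeat match goal with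
  | |- context [firstn ?k (?a ++ ?b)] => rewrite (@firstn_app_length _ a b k) by solve_length
  | |- context [skipn ?k (?a ++ ?b)] => rewrite (@skipn_app_length _ a b k) by solve_length
  | |- context [firstn (?k + ?j) (?a ++ ?b)] =>
      rewrite (@firstn_app_length_add _ a b k j) by solve_length
  | |- context [skipn (?k + ?j) (?a ++ ?b)] =>
      rewrite (@skipn_app_length_add _ a b k j) by solve_length
  | |- context [firstn _ ((?a ++ ?b) ++ ?c)] => rewrite <- (app_assoc a b c)
  | |- context [skipn _ ((?a ++ ?b) ++ ?c)] => rewrite <- (app_assoc a b c)
  end.
Ltac simpl_blocks_in H := revert H; simpl_blocks; intros H.

Section CoordMaps.
Variables (M : Type) (L : lang M).

Definition coord_map N (f : list M -> list M) k := exists sigma,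
  length sigma = k /\ (forall i, In i sigma -> i < N) /\
  forall s, length s = N -> f s = map (fun i => nth i s (zero L)) sigma.

Lemma coord_map_id N : coord_map N (fun s => s) N.
Proof.
  exists (seq 0 N). rewrite length_seq. repeat split.
  - intros i Hi. apply in_seq in Hi. lia.
  - intros s Hs. apply (nth_ext _ _ (zero L) (zero L)); [now rewrite length_map, length_seq|].
    intros j Hj. rewrite Hs in Hj. symmetry.
    rewrite (nth_indep _ (zero L) ((fun i => nth i s (zero L)) 0))
      by (rewrite length_map, length_seq; lia).
    rewrite (map_nth (fun i => nth i s (zero L)) (seq 0 N) 0 j), seq_nth by lia. reflexivity.
Qed.

Lemma coord_map_app N f g k1 k2 :
  coord_map N f k1 -> coord_map N g k2 -> coord_map N (fun s => f s ++ g s) (k1 + k2).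
Proof.
  intros [s1 (H1&H2&H3)] [s2 (H4&H5&H6)]. exists (s1 ++ s2). rewrite length_app. repeat split.
  - lia.
  - intros i Hi. apply in_app_or in Hi; destruct Hi; auto.
  - intros s Hs. rewrite map_app, H3, H6; auto.
Qed.

Lemma coord_map_firstn N f k j :
  coord_map N f k -> j <= k -> coord_map N (fun s => firstn j (f s)) j.
Proof.
  intros [s1 (H1&H2&H3)] Hj. exists (firstn j s1). rewrite length_firstn. repeat split.
  - lia.
  - intros i Hi. apply H2. rewrite <- (firstn_skipn j s1). apply in_or_app; auto.
  - intros s Hs. rewrite H3 by auto. apply firstn_map.
Qed.

Lemma coord_map_skipn N f k j :
  coord_map N f k -> j <= k -> coord_map N (fun s => skipn j (f s)) (k - j).
Proof.
  intros [s1 (H1&H2&H3)] Hj. exists (skipn j s1). rewrite length_skipn. repeat split.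
  - lia.
  - intros i Hi. apply H2. rewrite <- (firstn_skipn j s1). apply in_or_app; auto.
  - intros s Hs. rewrite H3 by auto. apply skipn_map.
Qed.

End CoordMaps.

Ltac coords := first
  [ apply coord_map_id
  | apply coord_map_app; coords
  | eapply coord_map_firstn; [coords | lia]
  | eapply coord_map_skipn; [coords | lia] ].

Section Definable.
Variables (M : Type) (L : lang M).
Hypothesis HS : structure_axioms L.

Lemma pred_ext (P Q : list M -> Prop) : (forall s, P s <-> Q s) -> P = Q.
Proof.
  intros H; apply functional_extensionality; intros s; apply propositional_extensionality, H.
Qed.

Lemma Def_iff n (P Q : list M -> Prop) : Def L n P -> (forall s, P s <-> Q s) -> Def L n Q.
Proof. intros HP H; now rewrite <- (pred_ext H). Qed.

Lemma Def_length n A : Def L n A -> forall s, A s -> length s = n.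
Proof. destruct HS as [H _]; eauto. Qed.

(* Relativizing to [M^n] makes definability closed under negation, as the complement axiom of
   [structure_axioms] complements within [M^n]. *)
Definition DefOn n (P : list M -> Prop) := Def L n (fun s => length s = n /\ P s).

Lemma DefOn_iff n (P Q : list M -> Prop) :
  DefOn n P -> (forall s, length s = n -> (P s <-> Q s)) -> DefOn n Q.
Proof.
  intros HP H; eapply Def_iff; [exact HP|]; intros s.
  split; intros [H1 H2]; split; auto; apply H; auto.
Qed.

Lemma DefOn_of_Def n A : Def L n A -> DefOn n A.
Proof.
  intros HA; eapply Def_iff; [exact HA|]; intros s.
  split; [intros H; split; [eapply Def_length; eauto | auto] | tauto].
Qed.

Lemma Def_of_DefOn n P (Q : list M -> Prop) :
  DefOn n P -> (forall s, Q s <-> length s = n /\ P s) -> Def L n Q.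
Proof. intros HP H; eapply Def_iff; [exact HP|]; intros s; rewrite H; tauto. Qed.

Lemma DefOn_and n (P Q : list M -> Prop) : DefOn n P -> DefOn n Q -> DefOn n (fun s => P s /\ Q s).
Proof.
  destruct HS as (_&_&_&Hi&_). intros HP HQ.
  eapply Def_iff; [exact (Hi _ _ _ HP HQ)|]; intros s; tauto.
Qed.

Lemma DefOn_not n (P : list M -> Prop) : DefOn n P -> DefOn n (fun s => ~ P s).
Proof.
  destruct HS as (_&_&Hc&_). intros HP.
  eapply Def_iff; [exact (Hc _ _ HP)|]; intros s; tauto.
Qed.

Lemma DefOn_exists_last n (P : list M -> Prop) :
  DefOn (S n) P -> DefOn n (fun s => exists a, P (s ++ [a])).
Proof.
  destruct HS as (_&_&_&_&_&_&Hp&_). intros HP.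
  eapply Def_iff; [exact (Hp _ _ HP)|]; intros s; split.
  - intros [a [H1 H2]]. rewrite length_app in H1; simpl in H1. split; [lia | eauto].
  - intros [H1 [a H2]]. exists a. rewrite length_app; simpl; split; [lia | auto].
Qed.

Lemma DefOn_exists k : forall n (P : list M -> Prop), DefOn (n + k) P ->
  DefOn n (fun s => exists u, length u = k /\ P (s ++ u)).
Proof.
  induction k; intros n P HP.
  - rewrite Nat.add_0_r in HP. eapply DefOn_iff; [exact HP|]. intros s _; split.
    + intros H; exists []; rewrite app_nil_r; auto.
    + intros [[|] [Hu H]]; [now rewrite app_nil_r in H | simpl in Hu; lia].
  - rewrite Nat.add_succ_r in HP. apply DefOn_exists_last, IHk in HP.
    eapply DefOn_iff; [exact HP|]. intros s _; split.
    + intros [u [Hu [a Ha]]]. exists (u ++ [a]). rewrite length_app, app_assoc; simpl.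
      split; [lia | auto].
    + intros [u [Hu H]]. destruct (exists_last (l:=u)) as [u' [a ->]].
      { intros ->; simpl in Hu; lia. }
      rewrite length_app in Hu; simpl in Hu. exists u'; split; [lia|].
      exists a. now rewrite <- app_assoc.
Qed.

Lemma Def_and_forall_lt N (P : list M -> Prop) (Q : nat -> list M -> Prop) K :
  Def L N P -> (forall j, j < K -> Def L N (Q j)) ->
  Def L N (fun w => P w /\ forall j, j < K -> Q j w).
Proof.
  induction K; intros HP HQ.
  - eapply Def_iff; [exact HP|]; intros w; split; [intros; split; auto; intros; lia | tauto].
  - destruct HS as (_&_&_&Hi&_).
    pose proof (Hi _ _ _ (IHK HP (fun j Hj => HQ j ltac:(lia))) (HQ K ltac:(lia))) as H.
    eapply Def_iff; [exact H|]; intros w; split.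
    + intros [[H1 H2] H3]; split; auto; intros j Hj.
      destruct (Nat.eq_dec j K); [subst; auto | apply H2; lia].
    + intros [H1 H2]; split; [split|]; auto.
Qed.

(* The diagonals of [structure_axioms] identify an appended block with the selected coordinates. *)
Lemma DefOn_select n k A sigma : Def L k A -> length sigma = k -> (forall i, In i sigma -> i < n) ->
  DefOn n (fun s => A (map (fun i => nth i s (zero L)) sigma)).
Proof.
  intros HA Hlen Hin. destruct HS as (_&Hf&_&_&Hp&Hd&_).
  assert (Hsig : forall j, j < k -> nth j sigma 0 < n) by (intros j Hj; apply Hin, nth_In; lia).
  set (W := fun w => (length (firstn n w) = n /\ A (skipn n w)) /\ forall j, j < k ->
     (length w = n + k /\ nth_error w (n + j) = nth_error w (nth j sigma 0))).
  assert (HW : Def L (n + k) W).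
  { apply Def_and_forall_lt; [exact (Hp n k _ A (Hf n) HA)|].
    intros j Hj. specialize (Hsig j Hj). apply Hd; lia. }
  apply DefOn_of_Def, DefOn_exists in HW.
  eapply DefOn_iff; [exact HW|]. intros s Hs.
  assert (Hsel : forall u j, j < k ->
    nth_error (s ++ u) (n + j) = nth_error (s ++ u) (nth j sigma 0) <->
    nth_error u j = nth_error (map (fun i => nth i s (zero L)) sigma) j).
  { intros u j Hj. specialize (Hsig j Hj).
    rewrite nth_error_app2, nth_error_app1 by lia. replace (n + j - length s) with j by lia.
    rewrite nth_error_map, (nth_error_nth' sigma 0) by lia; simpl.
    rewrite (nth_error_nth' s (zero L)) by lia. reflexivity. }
  unfold W; split.
  - intros [u [Hu [[_ H1] H2]]]. rewrite skipn_app_length in H1 by auto.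
    replace (map (fun i => nth i s (zero L)) sigma) with u; auto.
    apply nth_error_ext. intros j. destruct (Nat.lt_ge_cases j k).
    + apply Hsel; auto. apply H2; auto.
    + rewrite (proj2 (nth_error_None u j)) by lia. symmetry. apply nth_error_None.
      rewrite length_map; lia.
  - intros HA'. exists (map (fun i => nth i s (zero L)) sigma). rewrite length_map.
    split; auto. rewrite firstn_app_length, skipn_app_length by auto. repeat split; auto.
    + rewrite length_app, length_map; lia.
    + apply Hsel; auto.
Qed.

Lemma DefOn_comp N k k' A f :
  Def L k A -> coord_map L N f k' -> k' = k -> DefOn N (fun s => A (f s)).
Proof.
  intros HA [sg (H1&H2&H3)] <-.
  eapply DefOn_iff; [exact (DefOn_select HA H1 H2)|]. intros s Hs. rewrite H3; tauto.
Qed.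

Lemma Def_singleton (c : list M) : Def L (length c) (fun s => s = c).
Proof.
  destruct HS as (_&Hf&_&_&Hp&_&_&_&_&Hs). induction c as [|a c IH].
  - eapply Def_iff; [apply (Hf 0)|]. intros [|]; simpl; split; congruence.
  - eapply Def_iff; [exact (Hp _ _ _ _ (Hs a) IH)|].
    intros [|b s]; simpl; split.
    + intros [H1 _]; discriminate.
    + discriminate.
    + intros [H1 H2]; inversion H1; subst; auto.
    + intros E; inversion E; subst; auto.
Qed.

Lemma Def_fiber a j b A (c : list M) : Def L (a + j + b) A -> length c = j ->
  Def L (a + b) (fun v => A (firstn a v ++ c ++ skipn a v)).
Proof.
  intros HA Hc.
  assert (HP : DefOn ((a + b) + j) (fun w => skipn (a + b) w = c /\
     A (firstn a (firstn (a + b) w) ++ skipn (a + b) w ++ skipn a (firstn (a + b) w)))).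
  { apply DefOn_and.
    - eapply DefOn_comp with (A := fun s => s = c); [apply Def_singleton | coords | lia].
    - eapply DefOn_comp with (A := A); [exact HA | coords | lia]. }
  apply DefOn_exists in HP. eapply Def_of_DefOn; [exact HP|]. intros v. split.
  - intros H. assert (Hl : length v = a + b).
    { pose proof (Def_length HA H) as E. rewrite !length_app in E.
      pose proof (f_equal (@length M) (firstn_skipn a v)) as E2. rewrite length_app in E2. lia. }
    split; auto. exists c. split; auto. now rewrite firstn_app_length, skipn_app_length.
  - intros [Hl [u [Hu [H1 H2]]]]. rewrite firstn_app_length, skipn_app_length in * by auto.
    now subst.
Qed.

Lemma Def_fiber_left j b A (c : list M) : Def L (j + b) A -> length c = j ->
  Def L b (fun v => A (c ++ v)).
Proof. intros HA Hc. exact (Def_fiber (a := 0) HA Hc). Qed.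

End Definable.

Ltac DefOn_atom HS P HP := eapply DefOn_comp with (A := P); [exact HS | exact HP | coords | lia].

(** * Ordered groups and definable metric spaces *)

Section OrderedGroup.
Variables (M : Type) (L : lang M).
Hypothesis HL : ogroup_axioms L.

Lemma og_lt_trans x y z : lt L x y -> lt L y z -> lt L x z.
Proof. destruct HL as (_&H&_); eauto. Qed.

Lemma og_trichotomy x y : lt L x y \/ x = y \/ lt L y x.
Proof. destruct HL as (_&_&H&_); auto. Qed.

Lemma og_exists_pos : exists e, lt L (zero L) e.
Proof. destruct HL as (_&_&_&_&_&_&_&_&H). apply (H (zero L)). Qed.

Lemma og_le_lt_trans a b c : le L a b -> lt L b c -> lt L a c.
Proof. intros [H|<-] H2; [eapply og_lt_trans; eauto | auto]. Qed.

Lemma og_add_lt_l a b c : lt L a b -> lt L (add L c a) (add L c b).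
Proof. destruct HL as (_&_&_&_&_&_&H&_); intros; apply H; auto. Qed.

(* The group need not be abelian, so residuals are taken on the left. *)
Lemma og_residual a d : lt L a d ->
  lt L (zero L) (add L (opp L a) d) /\ add L a (add L (opp L a) d) = d.
Proof.
  destruct HL as (_&_&_&Has&H0&Hopp&_). intros H. split.
  - rewrite <- (proj1 (Hopp a)). now apply og_add_lt_l.
  - now rewrite Has, (proj2 (Hopp a)), (proj1 (H0 d)).
Qed.

End OrderedGroup.

Section Metric.
Variables (M : Type) (L : lang M).
Hypothesis HL : ogroup_axioms L.
Variables (k : nat) (Y : list M -> Prop) (d : list M -> list M -> M).
Hypothesis HY : def_metric_space L k Y d.

Lemma dist_self x : Y x -> d x x = zero L.
Proof. destruct HY as (_&_&_&H&_). intros Hx. now apply H. Qed.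

Lemma dist_lt_residual x y z r : Y x -> Y y -> Y z ->
  lt L (d x y) r -> lt L (d y z) (add L (opp L (d x y)) r) -> lt L (d x z) r.
Proof.
  destruct HY as (_&_&_&_&_&Htr). intros Hx Hy Hz H1 H2.
  eapply og_le_lt_trans; [exact HL | apply (Htr x y z); auto |].
  rewrite <- (proj2 (og_residual HL H1)). now apply og_add_lt_l.
Qed.

Definition closure (A : list M -> Prop) g :=
  Y g /\ forall r, lt L (zero L) r -> exists g', A g' /\ lt L (d g g') r.

Lemma closure_mono (A B : list M -> Prop) g :
  (forall h, A h -> B h) -> closure A g -> closure B g.
Proof.
  intros H [H1 H2]; split; auto. intros r Hr. destruct (H2 r Hr) as (g'&Ha&Hl). eauto.
Qed.

Lemma closure_closed A : (forall g, A g -> Y g) -> closed_in L Y d (closure A).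
Proof.
  intros HA. split; [intros g [H _]; auto|]. split; [intros g [H _]; auto|].
  intros g [Hg Hn].
  assert (exists r, lt L (zero L) r /\ forall g', A g' -> ~ lt L (d g g') r) as (r&Hr&Hfar).
  { apply NNPP; intros C. apply Hn. split; auto. intros r Hr. apply NNPP; intros C2.
    apply C. exists r; split; auto. intros g' Hg' Hlt. apply C2; eauto. }
  exists r; split; auto. intros y Hy Hgy. split; auto. intros [_ Hcl].
  destruct (Hcl _ (proj1 (og_residual HL Hgy))) as (g'&Hg'&Hlt).
  apply (Hfar g' Hg'). eapply dist_lt_residual; eauto.
Qed.

End Metric.

Lemma open_in_iff M (L : lang M) X d (U V : list M -> Prop) :
  open_in L X d U -> (forall x, U x <-> V x) -> open_in L X d V.
Proof. intros H E. now rewrite <- (pred_ext E). Qed.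

Lemma closed_in_preimage M (L : lang M) (X Y : list M -> Prop) dX dY f (C : list M -> Prop) :
  (forall x, X x -> Y (f x)) -> cont1 L X dX dY f -> closed_in L Y dY C ->
  closed_in L X dX (fun x => X x /\ C (f x)).
Proof.
  intros Hf Hc [_ [_ Hop]]. split; [intros x [H _]; auto|]. split; [intros x [H _]; auto|].
  intros x [Hx Hn]. assert (HnC : ~ C (f x)) by auto.
  destruct (Hop (f x) (conj (Hf x Hx) HnC)) as (r&Hr&Hball).
  destruct (Hc x Hx r Hr) as (de&Hde&Hcont).
  exists de. split; auto. intros x' Hx' Hd. split; auto. intros [_ HC].
  exact (proj2 (Hball (f x') (Hf x' Hx') (Hcont x' Hx' Hd)) HC).
Qed.

Lemma cont1_section M (L : lang M) k X1 d1 X2 d2 dY f q :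
  def_metric_space L k X2 d2 -> X2 q -> cont2 L X1 d1 X2 d2 dY f ->
  cont1 L X1 d1 dY (fun g => f g q).
Proof.
  intros H2 Hq Hc g Hg r Hr. destruct (Hc g q Hg Hq r Hr) as (de&Hde&Hcont).
  exists de; split; auto. intros g' Hg' Hd. apply Hcont; auto. now rewrite (dist_self H2 Hq).
Qed.

Lemma filtered_map M (T : list M -> Prop) F (Phi : (list M -> Prop) -> list M -> Prop) :
  (forall (A B : list M -> Prop), (forall x, A x -> B x) -> forall x, Phi A x -> Phi B x) ->
  filtered T F -> filtered T (fun t => Phi (F t)).
Proof.
  intros Hmono [Hne Hf]. split; auto. intros t1 t2 H1 H2.
  destruct (Hf t1 t2 H1 H2) as (t3&H3&Hsub). exists t3; split; auto.
  intros x Hx. split; refine (Hmono (F t3) _ _ x Hx); intros y Hy; apply (Hsub y Hy).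
Qed.

(** * Definable families *)

Section Graphs.
Variable M : Type.
Implicit Types (T X Y : list M -> Prop) (s t x y : list M).

Definition map_graph X (f : list M -> list M) s := exists x, X x /\ s = x ++ f x.

Definition map2_graph X Y (f : list M -> list M -> list M) s :=
  exists x y, X x /\ Y y /\ s = x ++ y ++ f x y.

Definition family_graph T (F : list M -> list M -> Prop) s :=
  exists t x, T t /\ F t x /\ s = t ++ x.

Lemma map_graph_iff X f x z : (forall x', X x' -> length x' = length x) ->
  map_graph X f (x ++ z) <-> X x /\ z = f x.
Proof.
  intros Hl; split.
  - intros (x'&Hx'&E). apply app_inj_length in E as [-> ->]; auto. symmetry; auto.
  - intros [Hx ->]. now exists x.
Qed.

Lemma map2_graph_iff X Y f x y z :
  (forall x', X x' -> length x' = length x) -> (forall y', Y y' -> length y' = length y) ->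
  map2_graph X Y f (x ++ y ++ z) <-> X x /\ Y y /\ z = f x y.
Proof.
  intros Hlx Hly; split.
  - intros (x'&y'&Hx'&Hy'&E). apply app_inj_length in E as [-> E]; [|symmetry; auto].
    apply app_inj_length in E as [-> ->]; [auto | symmetry; auto].
  - intros (Hx&Hy&->). now exists x, y.
Qed.

Lemma family_graph_iff T F t x : (forall t', T t' -> length t' = length t) ->
  family_graph T F (t ++ x) <-> T t /\ F t x.
Proof.
  intros Hl; split.
  - intros (t'&x'&Ht'&Hx'&E). apply app_inj_length in E as [-> ->]; auto. symmetry; auto.
  - intros [Ht Hx]. now exists t, x.
Qed.

End Graphs.

Section DefinableFamilies.
Variables (M : Type) (L : lang M).
Hypothesis HS : structure_axioms L.

Lemma Def_same_length n (A : list M -> Prop) (x : list M) : Def L n A -> length x = n ->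
  forall x', A x' -> length x' = length x.
Proof. intros HA Hx x' Hx'. rewrite Hx. exact (Def_length HS HA Hx'). Qed.

Lemma def_family_member k n T F t : def_family L k n T F -> T t -> Def L n (F t).
Proof.
  intros [HT HF] Ht. assert (Hlt := Def_length HS HT Ht).
  eapply Def_iff; [exact (Def_fiber_left HS HF Hlt)|]. intros x.
  change (family_graph T F (t ++ x) <-> F t x).
  rewrite family_graph_iff by (eapply Def_same_length; eauto). tauto.
Qed.

Definition lt_graph s := exists a b, s = [a; b] /\ lt L a b.

Lemma Def_lt_graph : Def L 2 lt_graph.
Proof. destruct HS as (_&_&_&_&_&_&_&H&_); exact H. Qed.

Lemma lt_graph_iff a b : lt_graph ([a] ++ [b]) <-> lt L a b.
Proof.
  split; [intros (x&y&E&H); inversion E; now subst | intros H; now exists a, b].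
Qed.

Definition positive_singleton t := exists a, t = [a] /\ lt L (zero L) a.

Lemma Def_positive_singleton : Def L 1 positive_singleton.
Proof.
  eapply Def_iff;
    [exact (Def_fiber_left HS (j := 1) (b := 1) (c := [zero L]) Def_lt_graph eq_refl)|].
  intros [|a [|b t]]; split; try (intros (x&y&E&_); discriminate);
    try (intros (x&E&_); discriminate).
  - intros (x&y&E&H); inversion E; subst; now exists y.
  - intros (x&E&H); inversion E; subst; now exists (zero L), x.
Qed.

Lemma def_family_preimage k n1 n2 T F (X Y : list M -> Prop) f :
  def_family L k n2 T F -> Def L n1 X -> def_map L n1 X n2 Y f ->
  def_family L k n1 T (fun t x => X x /\ F t (f x)).
Proof.
  intros [HT HF] HX [_ Hf]. split; auto.
  assert (HP : DefOn L (k + n1 + n2) (fun w =>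
     family_graph T F (firstn k (firstn (k + n1) w) ++ skipn (k + n1) w) /\
     map_graph X f (skipn k (firstn (k + n1) w) ++ skipn (k + n1) w))).
  { apply DefOn_and; auto;
      [DefOn_atom HS (family_graph T F) HF | DefOn_atom HS (map_graph X f) Hf]. }
  apply DefOn_exists in HP; auto. eapply Def_of_DefOn; [exact HP|]. intros s. split.
  - intros (t&x&Ht&[Hx HFx]&->).
    assert (Hlt := Def_length HS HT Ht). assert (Hlx := Def_length HS HX Hx).
    assert (Hlf : length (x ++ f x) = n1 + n2) by (eapply Def_length; eauto; now exists x).
    rewrite length_app in Hlf. split; [solve_length|].
    exists (f x); split; [lia|]. simpl_blocks. split; [now exists t, (f x) | now exists x].
  - intros [Hl (u&Hu&H1&H2)]. apply split_length in Hl as (t&x&Ht&Hx&->). simpl_blocks_in H1.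
    simpl_blocks_in H2.
    apply family_graph_iff in H1 as [HTt HFt]; [|eapply Def_same_length; eauto].
    apply map_graph_iff in H2 as [HXx ->]; [|eapply Def_same_length; eauto].
    now exists t, x.
Qed.

Lemma def_family_image k n1 n2 T F (X Y : list M -> Prop) f :
  def_family L k n1 T F -> Def L n1 X -> def_map L n1 X n2 Y f ->
  (forall t x, T t -> F t x -> X x) ->
  def_family L k n2 T (fun t y => exists x, F t x /\ f x = y).
Proof.
  intros [HT HF] HX [_ Hf] HFX. split; auto.
  assert (HP : DefOn L (k + n2 + n1) (fun w =>
     family_graph T F (firstn k (firstn (k + n2) w) ++ skipn (k + n2) w) /\
     map_graph X f (skipn (k + n2) w ++ skipn k (firstn (k + n2) w)))).
  { apply DefOn_and; auto;
      [DefOn_atom HS (family_graph T F) HF | DefOn_atom HS (map_graph X f) Hf]. }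
  apply DefOn_exists in HP; auto. eapply Def_of_DefOn; [exact HP|]. intros s. split.
  - intros (t&y&Ht&(x&HFx&<-)&->).
    assert (Hx := HFX t x Ht HFx).
    assert (Hlt := Def_length HS HT Ht). assert (Hlx := Def_length HS HX Hx).
    assert (Hlf : length (x ++ f x) = n1 + n2) by (eapply Def_length; eauto; now exists x).
    rewrite length_app in Hlf. split; [solve_length|].
    exists x; split; [lia|]. simpl_blocks. split; [now exists t, x | now exists x].
  - intros [Hl (u&Hu&H1&H2)]. apply split_length in Hl as (t&y&Ht&Hy&->). simpl_blocks_in H1.
    simpl_blocks_in H2.
    apply family_graph_iff in H1 as [HTt HFt]; [|eapply Def_same_length; eauto].
    apply map_graph_iff in H2 as [HXu ->]; [|eapply Def_same_length; eauto].
    exists t, (f u). eauto.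
Qed.

(* The quantifier [forall r > 0] becomes [~ exists r], and the witness [g'] is guessed together
   with the value [d g g'] in one appended block. *)
Lemma def_family_closure k m T A (Y : list M -> Prop) d :
  def_family L k m T A -> def_metric_space L m Y d -> (forall t g, T t -> A t g -> Y g) ->
  def_family L k m T (fun t => closure L Y d (A t)).
Proof.
  intros [HT HA] HY HAY. split; auto. destruct HY as (HYdef&Hd&_).
  pose (near := fun w => family_graph T A (firstn k w ++ firstn m (skipn (k + m + 1) w)) /\
    map2_graph Y Y (fun x y => [d x y])
      (skipn k (firstn (k + m) w) ++ skipn (k + m + 1) w) /\
    lt_graph (skipn m (skipn (k + m + 1) w) ++ skipn (k + m) (firstn (k + m + 1) w))).
  assert (Hnear : forall t g r, length t = k -> Y g -> T t ->
    (exists u, length u = m + 1 /\ near (((t ++ g) ++ [r]) ++ u)) <->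
    exists g', A t g' /\ lt L (d g g') r).
  { intros t g r Ht Hg HTt. assert (Hlg := Def_length HS HYdef Hg). unfold near. split.
    - intros (u&Hu&H1&H2&H3). apply split_length in Hu as (g'&v&Hg'&Hv&->).
      simpl_blocks_in H1. simpl_blocks_in H2. simpl_blocks_in H3.
      apply family_graph_iff in H1 as [_ HAg']; [|eapply Def_same_length; eauto].
      apply map2_graph_iff in H2 as (_&_&Ev); try (eapply Def_same_length; eauto).
      subst v. apply lt_graph_iff in H3. eauto.
    - intros (g'&HAg'&Hlt). assert (Hlg' := Def_length HS HYdef (HAY t g' HTt HAg')).
      exists (g' ++ [d g g']). split; [solve_length|]. simpl_blocks.
      split; [now exists t, g' | split; [exists g, g'; eauto | now apply lt_graph_iff]]. }
  pose (far := fun w => positive_singleton (skipn (k + m) w) /\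
    ~ exists u, length u = m + 1 /\ near (w ++ u)).
  assert (HP : DefOn L (k + m) (fun w => T (firstn k w) /\ Y (skipn k w) /\
    ~ exists v, length v = 1 /\ far (w ++ v))).
  { repeat apply DefOn_and; auto; [DefOn_atom HS T HT | DefOn_atom HS Y HYdef |].
    apply DefOn_not, DefOn_exists with (P := far); auto. apply DefOn_and; auto.
    - DefOn_atom HS positive_singleton Def_positive_singleton.
    - apply DefOn_not, DefOn_exists with (P := near); auto. repeat apply DefOn_and; auto.
      + DefOn_atom HS (family_graph T A) HA.
      + DefOn_atom HS (map2_graph Y Y (fun x y => [d x y])) Hd.
      + DefOn_atom HS lt_graph Def_lt_graph. }
  eapply Def_of_DefOn; [exact HP|]. intros s. split.
  - intros (t&g&HTt&[Hg Hcl]&->). assert (Hlt := Def_length HS HT HTt).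
    assert (Hlg := Def_length HS HYdef Hg). split; [solve_length|]. simpl_blocks.
    repeat split; auto. intros ([|r [|]]&Hv&Hpos&Hno); simpl in Hv; try lia.
    simpl_blocks_in Hpos. destruct Hpos as (r'&[= <-]&Hr).
    apply Hno, Hnear; auto.
  - intros [Hl (HTt&Hg&Hno)]. apply split_length in Hl as (t&g&Ht&Hg'&->). simpl_blocks_in HTt.
    simpl_blocks_in Hg. exists t, g. repeat split; auto. intros r Hr.
    apply (Hnear t g r); auto. apply NNPP. intros Hfar. apply Hno. exists [r].
    split; auto. split; [|exact Hfar]. simpl_blocks. now exists r.
Qed.

End DefinableFamilies.

(** * The orbit map of a definably compact group action *)

Section Action.
Variables (M : Type) (L : lang M).
Hypothesis HL : ogroup_axioms L.
Hypothesis HS : structure_axioms L.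
Variables (m : nat) (G : list M -> Prop) (dG : list M -> list M -> M)
  (mul : list M -> list M -> list M) (inv : list M -> list M) (e : list M).
Hypothesis HG : def_metric_group L m G dG mul inv e.
Hypothesis HGc : def_compact L m G (closed_in L G dG).
Variables (n : nat) (X : list M -> Prop) (dX : list M -> list M -> M).
Hypothesis HX : def_metric_space L n X dX.
Variable act : list M -> list M -> list M.
Hypothesis Hact : def_cont_action L m G dG mul e n X dX act.
Variables (Q : list M -> Prop) (pi : list M -> list M).
Hypothesis HQ : def_quotient L G act n X dX Q pi.

Lemma G_metric : def_metric_space L m G dG. Proof. apply HG. Qed.
Lemma G_def : Def L m G. Proof. apply G_metric. Qed.
Lemma G_unit : G e. Proof. apply HG. Qed.
Lemma G_mul g h : G g -> G h -> G (mul g h). Proof. destruct HG as (_&_&[H _]&_); auto. Qed.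
Lemma G_inv g : G g -> G (inv g). Proof. destruct HG as (_&_&_&[H _]&_); auto. Qed.
Lemma mul_inv_l g : G g -> mul (inv g) g = e.
Proof. destruct HG as (_&_&_&_&_&_&H&_); intros; apply H; auto. Qed.

Lemma X_def : Def L n X. Proof. apply HX. Qed.
Lemma act_in g x : G g -> X x -> X (act g x). Proof. destruct Hact as ([H _]&_); auto. Qed.
Lemma act_unit x : X x -> act e x = x. Proof. destruct Hact as (_&_&H&_); auto. Qed.
Lemma act_mul g h x : G g -> G h -> X x -> act (mul g h) x = act g (act h x).
Proof. destruct Hact as (_&_&_&H); auto. Qed.
Lemma act_inv_l g x : G g -> X x -> act (inv g) (act g x) = x.
Proof. intros. rewrite <- act_mul, mul_inv_l by auto using G_inv. now apply act_unit. Qed.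
Lemma Def_act_graph : Def L (m + n + n) (map2_graph G X act).
Proof. destruct Hact as ([_ H]&_); exact H. Qed.

Lemma Q_def : Def L n Q. Proof. apply HQ. Qed.
Lemma Q_sub q : Q q -> X q. Proof. destruct HQ as (_&H&_); auto. Qed.
Lemma pi_in_Q x : X x -> Q (pi x). Proof. destruct HQ as (_&_&H&_); apply H. Qed.
Lemma pi_in_orbit x : X x -> exists g, G g /\ pi x = act g x.
Proof. destruct HQ as (_&_&H&_); apply H. Qed.

Lemma Q_in_orbit_iff x q : X x -> Q q -> (exists g, G g /\ q = act g x) <-> q = pi x.
Proof.
  destruct HQ as (_&_&_&Huniq&_). intros Hx Hq; split.
  - intros H. eapply Huniq; eauto using pi_in_Q, pi_in_orbit.
  - intros ->. now apply pi_in_orbit.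
Qed.

Lemma pi_fix q : Q q -> pi q = q.
Proof.
  intros Hq. symmetry. apply Q_in_orbit_iff; auto using Q_sub.
  exists e; split; [apply G_unit | now rewrite act_unit by auto using Q_sub].
Qed.

Lemma pi_act g x : G g -> X x -> pi (act g x) = pi x.
Proof.
  intros Hg Hx. apply Q_in_orbit_iff; auto using act_in, pi_in_Q.
  destruct (pi_in_orbit (act_in Hg Hx)) as (h&Hh&->). exists (mul h g).
  split; [auto using G_mul | now rewrite act_mul].
Qed.

Lemma pi_eq_orbit x y : X x -> X y -> pi x = pi y -> exists h, G h /\ act h y = x.
Proof.
  intros Hx Hy E.
  destruct (pi_in_orbit Hx) as (g1&Hg1&E1). destruct (pi_in_orbit Hy) as (g2&Hg2&E2).
  exists (mul (inv g1) g2). split; [auto using G_mul, G_inv|].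
  rewrite act_mul, <- E2, <- E, E1 by auto using G_inv. now apply act_inv_l.
Qed.

Lemma pi_def_map : def_map L n X n Q pi.
Proof.
  split; [exact pi_in_Q|].
  assert (HP : DefOn L (n + n + m) (fun w => X (firstn n w) /\ Q (skipn n (firstn (n + n) w)) /\
    map2_graph G X act (skipn (n + n) w ++ firstn (n + n) w))).
  { repeat apply DefOn_and; auto; [DefOn_atom HS X X_def | DefOn_atom HS Q Q_def |].
    DefOn_atom HS (map2_graph G X act) Def_act_graph. }
  apply DefOn_exists in HP; auto. eapply Def_of_DefOn; [exact HP|]. intros s. split.
  - intros (x&Hx&->). assert (Hlx := Def_length HS X_def Hx).
    assert (Hlq := Def_length HS X_def (Q_sub (pi_in_Q Hx))).
    destruct (pi_in_orbit Hx) as (g&Hg&E). assert (Hlg := Def_length HS G_def Hg).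
    split; [solve_length|]. exists g. split; auto. simpl_blocks.
    repeat split; auto using pi_in_Q. rewrite E. now exists g, x.
  - intros [Hl (g&Hg&Hx&Hq&Hgraph)]. apply split_length in Hl as (x&q&Hlx&Hlq&->).
    simpl_blocks_in Hx. simpl_blocks_in Hq. simpl_blocks_in Hgraph.
    apply map2_graph_iff in Hgraph as (HGg&_&->);
      try (eapply Def_same_length; eauto using G_def, X_def).
    exists x. split; auto. do 2 f_equal. apply Q_in_orbit_iff; eauto.
Qed.

Lemma act_at_def_map q : X q -> def_map L m G n X (fun g => act g q).
Proof.
  intros Hq. assert (Hlq := Def_length HS X_def Hq). split; [auto using act_in|].
  assert (Hfib := Def_fiber HS Def_act_graph Hlq).
  eapply Def_iff; [exact Hfib|]. intros v. split.
  - intros Hv. pose proof (Def_length HS Hfib Hv) as Hl.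
    apply split_length in Hl as (g&z&Hlg&Hlz&->). simpl_blocks_in Hv.
    apply map2_graph_iff in Hv as (Hg&_&->); try (eapply Def_same_length; eauto using G_def, X_def).
    now exists g.
  - intros (g&Hg&->). assert (Hlg := Def_length HS G_def Hg). simpl_blocks. now exists g, q.
Qed.

Definition near_translates (x : list M) (C : list M -> Prop) (a : M) g :=
  G g /\ exists y, X y /\ lt L (dX x y) a /\ C (act g y).

Lemma near_translates_mono x C a1 a2 g :
  lt L a1 a2 -> near_translates x C a1 g -> near_translates x C a2 g.
Proof.
  intros H (Hg&y&Hy&Hxy&HC). split; auto. exists y. repeat split; auto. eapply og_lt_trans; eauto.
Qed.

Lemma def_family_near_translates x C : X x -> Def L n C ->
  def_family L 1 m (positive_singleton L) (fun t => near_translates x C (hd (zero L) t)).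
Proof.
  intros Hx HC. assert (Hlx := Def_length HS X_def Hx). split; [exact (Def_positive_singleton HS)|].
  assert (Hdist : Def L (n + 1) (fun u => map2_graph X X (fun x y => [dX x y]) (x ++ u))).
  { destruct HX as (_&Hd&_). rewrite <- Nat.add_assoc in Hd. exact (Def_fiber_left HS Hd Hlx). }
  assert (HP : DefOn L (1 + m + (n + 1 + n)) (fun w =>
    positive_singleton L (firstn 1 w) /\ G (skipn 1 (firstn (1 + m) w)) /\
    map2_graph X X (fun x y => [dX x y]) (x ++ firstn (n + 1) (skipn (1 + m) w)) /\
    lt_graph L (skipn n (firstn (n + 1) (skipn (1 + m) w)) ++ firstn 1 w) /\
    map2_graph G X act (skipn 1 (firstn (1 + m) w) ++ firstn n (skipn (1 + m) w) ++
      skipn (n + 1) (skipn (1 + m) w)) /\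
    C (skipn (n + 1) (skipn (1 + m) w)))).
  { repeat apply DefOn_and; auto.
    - DefOn_atom HS (positive_singleton L) (Def_positive_singleton HS).
    - DefOn_atom HS G G_def.
    - DefOn_atom HS (fun u => map2_graph X X (fun x y => [dX x y]) (x ++ u)) Hdist.
    - DefOn_atom HS (lt_graph L) (Def_lt_graph HS).
    - DefOn_atom HS (map2_graph G X act) Def_act_graph.
    - DefOn_atom HS C HC. }
  apply DefOn_exists in HP; auto. eapply Def_of_DefOn; [exact HP|]. intros s. split.
  - intros (t&g&(a&->&Ha)&(Hg&y&Hy&Hxy&HCy)&->). simpl.
    assert (Hlg := Def_length HS G_def Hg). assert (Hly := Def_length HS X_def Hy).
    assert (Hlz := Def_length HS X_def (act_in Hg Hy)).
    split; [solve_length|]. exists (y ++ [dX x y] ++ act g y). split; [solve_length|].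
    change (a :: g) with ([a] ++ g). simpl_blocks.
    repeat split; auto; [now exists a | now exists x, y | now apply lt_graph_iff | now exists g, y].
  - intros [Hl (u&Hu&Ha&Hg&Hd&Hlt&Hgraph&HC')].
    apply split_length in Hl as (t&g&Hlt1&Hlg&->). apply split_length in Hu as (p&z&Hlp&Hlz&->).
    apply split_length in Hlp as (y&r&Hly&Hlr&->).
    simpl_blocks_in Ha. simpl_blocks_in Hg. simpl_blocks_in Hd. simpl_blocks_in Hlt.
    simpl_blocks_in Hgraph. simpl_blocks_in HC'.
    destruct Ha as (a&->&Ha).
    apply map2_graph_iff in Hd as (_&Hy&->); try (eapply Def_same_length; eauto using X_def).
    apply lt_graph_iff in Hlt.
    apply map2_graph_iff in Hgraph as (_&_&->);
      try (eapply Def_same_length; eauto using G_def, X_def).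
    exists [a], g. repeat split; auto; [now exists a | exists y; auto].
Qed.

Lemma near_translates_common_limit x C : X x -> Def L n C ->
  (forall a, lt L (zero L) a -> exists g, near_translates x C a g) ->
  exists g0, G g0 /\ forall a, lt L (zero L) a -> closure L G dG (near_translates x C a) g0.
Proof.
  intros Hx HC Hne.
  destruct (HGc (k := 1) (T := positive_singleton L)
    (F := fun t => closure L G dG (near_translates x C (hd (zero L) t)))) as (g0&Hg0&Hall).
  - apply def_family_closure; auto using def_family_near_translates, G_metric.
    now intros t g _ [Hg _].
  - split; [destruct (og_exists_pos HL) as [a Ha]; now exists [a], a|].
    intros t1 t2 (a1&->&Ha1) (a2&->&Ha2). simpl.
    assert (Hsmall : forall a b, lt L a b -> forall g,
      closure L G dG (near_translates x C a) g -> closure L G dG (near_translates x C b) g).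
    { intros a b Hab g. apply closure_mono. intros h. now apply near_translates_mono. }
    destruct (og_trichotomy HL a1 a2) as [H|[<-|H]].
    + exists [a1]. split; [now exists a1|]. intros g Hg. split; eauto.
    + exists [a1]. split; [now exists a1|]. auto.
    + exists [a2]. split; [now exists a2|]. intros g Hg. split; eauto.
  - intros t (a&->&Ha). simpl. split.
    + apply (closure_closed HL G_metric). now intros g [Hg _].
    + destruct (Hne a Ha) as (g&Hg). exists g. split; [apply Hg|].
      intros r Hr. exists g. split; auto. now rewrite (dist_self G_metric (proj1 Hg)).
  - exists g0. split; auto. intros a Ha. exact (Hall [a] (ex_intro _ a (conj eq_refl Ha))).
Qed.

Lemma near_translates_limit_in x C g0 : X x -> closed_in L X dX C -> G g0 ->
  (forall a, lt L (zero L) a -> closure L G dG (near_translates x C a) g0) -> C (act g0 x).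
Proof.
  intros Hx [_ [_ Hop]] Hg0 Hlim. apply NNPP. intros HnC.
  destruct (Hop (act g0 x) (conj (act_in Hg0 Hx) HnC)) as (r&Hr&Hball).
  destruct Hact as (_&Hcont&_). destruct (Hcont g0 x Hg0 Hx r Hr) as (de&Hde&Hnear).
  destruct (proj2 (Hlim de Hde) de Hde) as (g&(Hg&y&Hy&Hxy&HCy)&Hgg).
  exact (proj2 (Hball (act g y) (act_in Hg Hy) (Hnear g y Hg Hy Hgg Hxy)) HCy).
Qed.

Lemma pi_closed_map : def_closed_map L n X dX Q pi.
Proof.
  intros C HC Hcl. assert (HCX : forall c, C c -> X c) by apply Hcl.
  split; [intros q (x&Hx&<-); auto using pi_in_Q|].
  split; [now intros q [Hq _]|]. split; [now intros x [Hx _]|].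
  intros x (Hx&_&HnC). apply NNPP. intros Hno.
  assert (Hne : forall a, lt L (zero L) a -> exists g, near_translates x C a g).
  { intros a Ha. apply NNPP. intros Hnone. apply Hno. exists a. split; auto.
    intros y Hy Hxy. split; auto. split; [auto using pi_in_Q|]. intros (c&Hc&Hpc).
    destruct (pi_eq_orbit (HCX c Hc) Hy Hpc) as (h&Hh&E).
    apply Hnone. exists h. split; auto. exists y. rewrite E. auto. }
  destruct (near_translates_common_limit Hx HC Hne) as (g0&Hg0&Hlim).
  apply HnC. exists (act g0 x). split; [|now apply pi_act].
  now apply near_translates_limit_in.
Qed.

Lemma compact_Q_of_compact_X :
  def_compact L n X (closed_in L X dX) -> def_compact L n Q (closed_Q L X dX Q pi).
Proof.
  intros HXc k T F HF Hfil Hcl.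
  destruct (HXc k T (fun t x => X x /\ F t (pi x))) as (x&Hx&Hall).
  - eapply def_family_preimage; eauto using X_def, pi_def_map.
  - apply filtered_map with (Phi := fun A x => X x /\ A (pi x)); [|exact Hfil].
    intros A B HAB y [Hy HA]; auto.
  - intros t Ht. destruct (Hcl t Ht) as [(HFQ&_&Hop) (q&Hq)]. split.
    + split; [now intros y [Hy _]|]. eapply open_in_iff; [exact Hop|]. intros y. split.
      * intros [Hy [_ Hn]]. split; auto. intros [_ HFy]; auto.
      * intros [Hy Hn]. repeat split; auto using pi_in_Q.
    + exists q. pose proof (HFQ _ Hq) as HQq. split; [now apply Q_sub | now rewrite pi_fix].
  - exists (pi x). split; [now apply pi_in_Q|]. intros t Ht. now apply Hall.
Qed.

Lemma orbit_meets_filtered_intersection k T F q : X q ->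
  def_family L k n T F -> filtered T F ->
  (forall t, T t -> closed_in L X dX (F t) /\ exists g, G g /\ F t (act g q)) ->
  exists g, G g /\ forall t, T t -> F t (act g q).
Proof.
  intros Hq HF Hfil Hcl.
  destruct (HGc (k := k) (T := T) (F := fun t g => G g /\ F t (act g q))) as (g&Hg&Hall).
  - eapply def_family_preimage; eauto using G_def, act_at_def_map.
  - apply filtered_map with (Phi := fun A g => G g /\ A (act g q)); [|exact Hfil].
    intros A B HAB g [Hg HA]; auto.
  - intros t Ht. destruct (Hcl t Ht) as [HFc (g&Hg&HFg)]. split; [|now exists g].
    apply closed_in_preimage with (Y := X) (dY := dX); auto using act_in.
    destruct Hact as (_&Hcont&_). exact (cont1_section HX Hq Hcont).
  - exists g. split; auto. intros t Ht. now apply Hall.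
Qed.

Lemma compact_X_of_compact_Q :
  def_compact L n Q (closed_Q L X dX Q pi) -> def_compact L n X (closed_in L X dX).
Proof.
  intros HQc k T F HF Hfil Hcl.
  assert (HFX : forall t x, T t -> F t x -> X x) by (intros t x Ht; apply (Hcl t Ht)).
  destruct (HQc k T (fun t q => exists x, F t x /\ pi x = q)) as (q&Hq&Hallq).
  - eapply def_family_image; eauto using X_def, pi_def_map.
  - apply filtered_map with (Phi := fun A q => exists x, A x /\ pi x = q); [|exact Hfil].
    intros A B HAB q (x&HA&<-). eauto.
  - intros t Ht. destruct (Hcl t Ht) as [HFc (x&Hx)]. split; [|now exists (pi x), x].
    apply pi_closed_map; [exact (def_family_member HS HF Ht) | exact HFc].
  - destruct (orbit_meets_filtered_intersection (Q_sub Hq) HF Hfil) as (g&Hg&Hall).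
    + intros t Ht. split; [apply (Hcl t Ht)|].
      destruct (Hallq t Ht) as (x&Hx&<-). pose proof (HFX t x Ht Hx) as HXx.
      destruct (pi_in_orbit HXx) as (h&Hh&E). exists (inv h). split; [now apply G_inv|].
      now rewrite E, act_inv_l.
    + exists (act g q). split; [auto using act_in, Q_sub | exact Hall].
Qed.

End Action.

Theorem proposition5p9 (M : Type) (L : lang M)
  (HL : ogroup_axioms L) (HS : structure_axioms L)
  (Hloc : locally_o_minimal L) (Hdc : definably_complete L)
  (m : nat) (G : list M -> Prop) (dG : list M -> list M -> M)
  (mul : list M -> list M -> list M) (inv : list M -> list M) (e : list M)
  (HG : def_metric_group L m G dG mul inv e)
  (HGc : def_compact L m G (closed_in L G dG))
  (n : nat) (X : list M -> Prop) (dX : list M -> list M -> M)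
  (HX : def_metric_space L n X dX)
  (act : list M -> list M -> list M)
  (Hact : def_cont_action L m G dG mul e n X dX act)
  (Q : list M -> Prop) (pi : list M -> list M)
  (HQ : def_quotient L G act n X dX Q pi) :
  def_closed_map L n X dX Q pi /\
  (def_compact L n X (closed_in L X dX) <-> def_compact L n Q (closed_Q L X dX Q pi)).
Proof.
  split; [|split].
  - exact (pi_closed_map HL HS HG HGc HX Hact HQ).
  - exact (compact_Q_of_compact_X HS HG HX Hact HQ).
  - exact (compact_X_of_compact_Q HL HS HG HGc HX Hact HQ).
Qed.
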